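(* Let $G_1$ and $G_2$ be graphs on $n$ nodes with Laplacian matrices $Q_1,Q_2$, let $k\in\{1,\dots,n\}$, and let $\hat B$ be an $n\times n$ zero-one matrix with exactly $k$ ones in every row and every column. For $p\ge 0$ let $$Q(p)=\begin{bmatrix} Q_1+kpI & -p\hat B\\ -p\hat B^T & Q_2+kpI\end{bmatrix},$$ with eigenvalues $0=\mu_N(p)\le \mu_{N-1}(p)\le\dots\le\mu_1(p)$, $N=2n$. Define the transition threshold $p^*=\sup\big(\{0\}\cup\{p>0:\ \mu_{N-1}(p)=2kp\}\big)$. Then $$p^*\ge \frac{1}{2k}\min\big(\mu_{n-1}(Q_1),\ \mu_{n-1}(Q_2)\big),$$ where $\mu_{n-1}(Q_i)$ denotes the second smallest eigenvalue (algebraic connectivity) of $Q_i$.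
   Context: $Q(p)$ is the Laplacian of the two-layer interdependent network with a $k$-to-$k$ interconnection of weight $p$; $2kp$ is always an eigenvalue of $Q(p)$ (eigenvector $[u^T,-u^T]^T$). The paper describes $p^*$ as the coupling value beyond which $\mu_{N-1}(p)\neq 2kp$; here it is formalized as the supremum above. *)

From HB Require Import structures.
From mathcomp Require Import all_boot all_order all_algebra.
From mathcomp Require Import boolp classical_sets reals constructive_ereal ereal.
Set Implicit Arguments. Unset Strict Implicit. Unset Printing Implicit Defensive.
Import Order.TTheory GRing.Theory Num.Theory.
Local Open Scope ring_scope.

Definition simple_graph (n : nat) (e : rel 'I_n) : Prop :=
  (forall i j, e i j = e j i) /\ (forall i, e i i = false).

Definition laplacian (R : pzRingType) (n : nat) (e : rel 'I_n) : 'M[R]_n :=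
  \matrix_(i, j) (if i == j then (#|[set l | e i l]|)%:R
                  else - (e i j)%:R).

Definition is_spectrum (R : realType) (m : nat) (A : 'M[R]_m) (s : seq R) : Prop :=
  sorted <=%R s /\ char_poly A = \prod_(x <- s) ('X - x%:P).

(* The sorted eigenvalue list of A (chosen classically; for real symmetric
   matrices it exists and is unique). *)
Definition spectrum (R : realType) (m : nat) (A : 'M[R]_m) : seq R :=
  xget [::] [set s | is_spectrum A s].

(* second smallest eigenvalue (mu_{m-1} in the paper's descending indexing) *)
Definition second_smallest_eig (R : realType) (m : nat) (A : 'M[R]_m) : R :=
  (spectrum A)`_1.

Definition supraQ (R : realType) (n k : nat) (Q1 Q2 B : 'M[R]_n) (p : R)
  : 'M[R]_(n + n) :=
  block_mx (Q1 + (k%:R * p)%:M) (- p *: B) (- p *: B^T) (Q2 + (k%:R * p)%:M).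

Definition transition_threshold (R : realType) (n k : nat) (Q1 Q2 B : 'M[R]_n)
  : \bar R :=
  ereal_sup [set (p%:E)%E | p in
     [set p : R | p = 0 \/ (0 < p /\ second_smallest_eig (supraQ k Q1 Q2 B p)
                                      = 2 * k%:R * p)]].

From HB Require Import structures.
From mathcomp Require Import all_boot all_order all_algebra.
From mathcomp Require Import boolp classical_sets reals constructive_ereal ereal.
From mathcomp Require Import sesquilinear spectral.
From mathcomp.real_closed Require Import complex.
From mathcomp Require Import ring lra.
Import Order.TTheory GRing.Theory Num.Theory.
Set Implicit Arguments. Unset Strict Implicit. Unset Printing Implicit Defensive.
Local Open Scope ring_scope.

(* The all-ones vector lies in the kernel of Q(p) and (1, -1) is an eigenvector
   for 2kp, so for p > 0 the second smallest eigenvalue of Q(p) is at most 2kp.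
   Conversely, write x orthogonal to 1 as (u, v) + t (1, -1) with u and v
   orthogonal to 1.  The (1, -1) part is an eigendirection for 2kp, and since
   2 u^T B v <= k (|u|^2 + |v|^2) when B >= 0 has row and column sums k,
     (u, v)^T Q(p) (u, v) >= u^T Q_1 u + v^T Q_2 v >= l_1 |u|^2 + l_2 |v|^2,
   where l_i, the second eigenvalue of Q_i, bounds the form of Q_i on the
   complement of 1.  Hence if 2kp <= min (l_1, l_2) the Rayleigh quotient of
   Q(p) on the complement of 1 is at least 2kp, and by the min-max principle
   the second eigenvalue of Q(p) equals 2kp: p = min (l_1, l_2) / (2k) is in the
   set whose supremum is p^*.  Both directions of the min-max principle are
   obtained by diagonalising the real symmetric matrix with a unitary matrix
   over R[i]. *)

Lemma sorted_count_nth1 (R : numDomainType) (P : pred R) (s : seq R) :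
  (forall x y, x <= y -> P y -> P x) -> sorted <=%R s -> (1 < size s)%N ->
  (1 < count P s)%N = P s`_1.
Proof.
case: s => [|a [|b t]] //= Pdown /andP[le_ab path_bt] _.
have [Pb|nPb] := boolP (P b); first by rewrite (Pdown a b le_ab Pb).
have /allP ge_b := order_path_min le_trans path_bt.
have -> : count P t = 0%N.
  apply/eqP; rewrite -leqn0 leqNgt -has_count; apply/hasPn => z /ge_b le_bz.
  by apply: contra nPb; apply: Pdown.
by case: (P a).
Qed.

Lemma count_gt1 (T : eqType) (P : pred T) (s : seq T) x y :
  x \in s -> y \in s -> x != y -> P x -> P y -> (1 < count P s)%N.
Proof.
move=> xs ys neq_xy Px Py.
have disj : count (predI (pred1 x) (pred1 y)) s = 0%N.
  apply/eqP; rewrite -leqn0 leqNgt -has_count; apply/hasPn => z _ /=.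
  by apply/andP => -[/eqP-> /eqP exy]; rewrite exy eqxx in neq_xy.
have := count_predUI (pred1 x) (pred1 y) s; rewrite disj addn0 => cnt.
have cx : (0 < count (pred1 x) s)%N by rewrite -has_count has_pred1.
have cy : (0 < count (pred1 y) s)%N by rewrite -has_count has_pred1.
apply: leq_trans (leq_add cx cy) _; rewrite -cnt.
by apply: sub_count => z /orP[] /eqP->.
Qed.

Section Forms.
Variables (R : comNzRingType) (m : nat).
Implicit Types (x y z e : 'rV[R]_m) (A : 'M[R]_m).

Definition vdot x y : R := (x *m y^T) 0 0.
Definition qform A x : R := vdot (x *m A) x.

Lemma vdotE x y : vdot x y = \sum_i x 0 i * y 0 i.
Proof. by rewrite /vdot mxE; apply: eq_bigr => i _; rewrite mxE. Qed.

Lemma vdotC x y : vdot x y = vdot y x.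
Proof. by rewrite !vdotE; apply: eq_bigr => i _; rewrite mulrC. Qed.

Lemma vdotDl x y z : vdot (x + y) z = vdot x z + vdot y z.
Proof. by rewrite /vdot mulmxDl mxE. Qed.

Lemma vdotDr x y z : vdot x (y + z) = vdot x y + vdot x z.
Proof. by rewrite vdotC vdotDl !(vdotC x). Qed.

Lemma vdotZl a x y : vdot (a *: x) y = a * vdot x y.
Proof. by rewrite /vdot -scalemxAl mxE. Qed.

Lemma vdotZr a x y : vdot x (a *: y) = a * vdot x y.
Proof. by rewrite vdotC vdotZl vdotC. Qed.

Lemma vdot_mulmx_trmx A x y : vdot (x *m A) y = vdot x (y *m A^T).
Proof. by rewrite /vdot trmx_mul trmxK mulmxA. Qed.

Lemma qform1 x : qform 1%:M x = vdot x x.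
Proof. by rewrite /qform mulmx1. Qed.

Lemma qformD_eigen A x e mu : A^T = A -> e *m A = mu *: e ->
  qform A (x + e) = qform A x + mu * (2 * vdot x e + vdot e e).
Proof.
move=> symA eA; rewrite /qform mulmxDl eA !(vdotDl, vdotDr, vdotZl).
rewrite [vdot (x *m A) e]vdot_mulmx_trmx symA eA vdotZr [vdot e x]vdotC; ring.
Qed.

End Forms.

Lemma vdot_row_mx (R : comNzRingType) m1 m2 (a c : 'rV[R]_m1) (b d : 'rV[R]_m2) :
  vdot (row_mx a b) (row_mx c d) = vdot a c + vdot b d.
Proof. by rewrite /vdot tr_row_mx mul_row_col mxE. Qed.

Lemma vdot_mulmxE (R : comNzRingType) m (x y : 'rV[R]_m) (A : 'M[R]_m) :
  vdot (x *m A) y = \sum_i \sum_j x 0 i * A i j * y 0 j.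
Proof.
rewrite vdotE; under eq_bigr => j _ do rewrite mxE mulr_suml.
exact: exchange_big.
Qed.

Lemma vdot_map (R S : comNzRingType) (f : {rmorphism R -> S}) m (x y : 'rV[R]_m) :
  vdot (map_mx f x) (map_mx f y) = f (vdot x y).
Proof. by rewrite /vdot map_trmx -map_mxM mxE. Qed.

Lemma vdot_ge0 (R : realDomainType) m (x : 'rV[R]_m) : 0 <= vdot x x.
Proof. by rewrite vdotE; apply: sumr_ge0 => i _; rewrite -expr2 sqr_ge0. Qed.

Lemma vdot_const1 (R : comNzRingType) n :
  vdot (const_mx 1 : 'rV[R]_n) (const_mx 1) = n%:R.
Proof.
by rewrite vdotE (eq_bigr (fun=> 1)) => [|i _]; rewrite ?sumr_const ?card_ord // !mxE mulr1.
Qed.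

Lemma const1_neq0 (R : nzRingType) n : (0 < n)%N -> (const_mx 1 : 'rV[R]_n) != 0.
Proof.
by move=> n_gt0; apply/eqP => /rowP /(_ (Ordinal n_gt0)); rewrite !mxE; apply/eqP/oner_neq0.
Qed.

Lemma vdot_mulmx_le (R : realDomainType) n (B : 'M[R]_n) (k : R) (u v : 'rV[R]_n) :
  (forall i j, 0 <= B i j) -> (forall i, \sum_j B i j = k) ->
  (forall j, \sum_i B i j = k) ->
  2 * vdot (u *m B) v <= k * (vdot u u + vdot v v).
Proof.
move=> B_ge0 rowB colB.
have : 0 <= \sum_i \sum_j B i j * (u 0 i - v 0 j) ^+ 2.
  by do 2![apply: sumr_ge0 => ? _]; rewrite mulr_ge0 ?sqr_ge0.
have -> : \sum_i \sum_j B i j * (u 0 i - v 0 j) ^+ 2 =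
    \sum_i \sum_j B i j * u 0 i ^+ 2 + \sum_i \sum_j B i j * v 0 j ^+ 2
    - 2 * \sum_i \sum_j u 0 i * B i j * v 0 j.
  rewrite mulr_sumr -big_split -sumrB /=; apply: eq_bigr => i _.
  by rewrite mulr_sumr -big_split -sumrB /=; apply: eq_bigr => j _; ring.
have -> : \sum_i \sum_j B i j * u 0 i ^+ 2 = k * vdot u u.
  rewrite vdotE mulr_sumr; apply: eq_bigr => i _.
  by rewrite -mulr_suml rowB expr2.
have -> : \sum_i \sum_j B i j * v 0 j ^+ 2 = k * vdot v v.
  rewrite exchange_big vdotE mulr_sumr; apply: eq_bigr => j _.
  by rewrite -mulr_suml colB expr2.
rewrite -vdot_mulmxE; lra.
Qed.

Lemma sumr_indicator (R : pzSemiRingType) (I : finType) (f : I -> R) (A : {pred I}) :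
  (forall i, f i = (i \in A)%:R) -> \sum_i f i = #|A|%:R.
Proof.
move=> fE; rewrite (eq_bigr (fun i => if i \in A then 1 else 0)) => [|i _]; last first.
  by rewrite fE; case: (i \in A).
by rewrite -big_mkcond sumr_const.
Qed.

Lemma ones_mulmx (R : pzSemiRingType) m n (M : 'M[R]_(m, n)) c :
  (forall j, \sum_i M i j = c) -> (const_mx 1 : 'rV_m) *m M = c *: const_mx 1.
Proof.
move=> colM; apply/rowP => j; rewrite !mxE -(colM j) mulr1.
by apply: eq_bigr => i _; rewrite mxE mul1r.
Qed.

Lemma orthogonal_row_on2 (F : fieldType) m (v : 'cV[F]_m) i j : i != j ->
  exists y : 'rV[F]_m,
    [/\ y != 0, y *m v = 0 & forall l, l != i -> l != j -> y 0 l = 0].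
Proof.
move=> neq_ij; have nji : (j == i) = false by rewrite eq_sym (negbTE neq_ij).
have [vi0|vi_neq0] := eqVneq (v i 0) 0.
  exists (delta_mx 0 i); split.
  - by apply/eqP => /matrixP /(_ 0 i); rewrite !mxE !eqxx => /eqP; rewrite oner_eq0.
  - by rewrite -rowE; apply/matrixP => a b; rewrite !ord1 !mxE.
  - by move=> l li _; rewrite mxE (negbTE li) andbF.
exists (v j 0 *: delta_mx 0 i - v i 0 *: delta_mx 0 j); split.
- apply/eqP => /matrixP /(_ 0 j); rewrite !mxE !eqxx nji /= => /eqP.
  by rewrite mulr0 mulr1 sub0r oppr_eq0 (negbTE vi_neq0).
- rewrite mulmxBl -!scalemxAl -!rowE.
  by apply/matrixP => a b; rewrite !ord1 !mxE mulrC subrr.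
- by move=> l li lj; rewrite !mxE (negbTE li) (negbTE lj) !andbF !mulr0 subrr.
Qed.

Lemma eigenvector_coord (F : fieldType) m (P : 'M[F]_m) (d v : 'rV[F]_m) lam :
  P \in unitmx -> (v *m P) *m (invmx P *m diag_mx d *m P) = lam *: (v *m P) ->
  forall l, v 0 l != 0 -> d 0 l = lam.
Proof.
move=> Punit eig l vl_neq0.
have vD : v *m diag_mx d = lam *: v.
  apply: (can_inj (mulmxK Punit)).
  by rewrite -scalemxAl -eig !mulmxA (mulmxK Punit).
by move/rowP/(_ l): vD; rewrite mul_mx_diag !mxE mulrC => /(mulIf vl_neq0).
Qed.

Section UnitaryForms.
Variable C : numClosedFieldType.
Local Open Scope sesquilinear_scope.

Lemma unitary_dot m (P : 'M[C]_m) (y v : 'rV[C]_m) : P \is unitarymx ->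
  (y *m P) *m (v *m P)^t* = y *m v^t*.
Proof.
move=> /unitarymxP PP.
by rewrite trmx_mul map_mxM mulmxA -(mulmxA y P) PP mulmx1.
Qed.

Lemma unitary_form m (P D : 'M[C]_m) (y : 'rV[C]_m) : P \is unitarymx ->
  (y *m P) *m (invmx P *m D *m P) *m (y *m P)^t* = y *m D *m y^t*.
Proof.
move=> Pu; rewrite invmx_unitary // !mulmxA -(mulmxA y P) (unitarymxP Pu) mulmx1.
by rewrite unitary_dot.
Qed.

Lemma dot_form m (y v : 'rV[C]_m) : (y *m v^t*) 0 0 = \sum_l y 0 l * (v 0 l)^*.
Proof. by rewrite mxE; apply: eq_bigr => l _; rewrite !mxE. Qed.

Lemma orthogonal_on_card_le1 m (y v : 'rV[C]_m) (S : {pred 'I_m}) :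
  (#|S| <= 1)%N -> v != 0 -> (forall l, v 0 l != 0 -> l \in S) ->
  (y *m v^t*) 0 0 = 0 -> forall l, l \in S -> y 0 l = 0.
Proof.
move=> S_le1 v_neq0 v_supp orth l Sl.
have v_off l' : l' != l -> v 0 l' = 0.
  move=> neq; apply/eqP; apply: contraNT neq => /v_supp Sl'.
  by apply/eqP; apply: (card_le1_eqP S_le1).
have vl_neq0 : v 0 l != 0.
  apply: contra v_neq0 => /eqP vl0; apply/eqP/rowP => l'; rewrite mxE.
  by have [->|/v_off] := eqVneq l' l.
move: orth; rewrite dot_form (bigD1 l) //= big1 => [|l' /v_off ->]; last first.
  by rewrite conjC0 mulr0.
by rewrite addr0 => /eqP; rewrite mulf_eq0 conjC_eq0 (negbTE vl_neq0) orbF => /eqP.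
Qed.

Lemma norm_form_eq0 m (y : 'rV[C]_m) : ((y *m y^t*) 0 0 == 0) = (y == 0).
Proof.
rewrite dot_form psumr_eq0 => [|l _]; last exact: mul_conjC_ge0.
apply/allP/eqP => [y0|-> l _]; last by rewrite mxE mul0r eqxx.
apply/rowP => l; apply/eqP; rewrite mxE -mul_conjC_eq0.
exact: (implyP (y0 l (mem_index_enum l))).
Qed.

Lemma norm_form_gt0 m (y : 'rV[C]_m) : y != 0 -> 0 < (y *m y^t*) 0 0.
Proof.
move=> y_neq0; rewrite lt0r norm_form_eq0 y_neq0 dot_form.
by apply: sumr_ge0 => l _; apply: mul_conjC_ge0.
Qed.

Lemma diag_form m (d y : 'rV[C]_m) :
  (y *m diag_mx d *m y^t*) 0 0 = \sum_l d 0 l * (y 0 l * (y 0 l)^*).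
Proof.
by rewrite mul_mx_diag dot_form; apply: eq_bigr => l _; rewrite !mxE mulrCA mulrA.
Qed.

Lemma diag_form_le m (d y : 'rV[C]_m) nu :
  (forall l, y 0 l != 0 -> d 0 l <= nu) ->
  (y *m diag_mx d *m y^t*) 0 0 <= nu * (y *m y^t*) 0 0.
Proof.
move=> le_d; rewrite diag_form dot_form mulr_sumr; apply: ler_sum => l _.
have [->|yl_neq0] := eqVneq (y 0 l) 0; first by rewrite !(mul0r, mulr0).
by rewrite ler_wpM2r ?mul_conjC_ge0 ?le_d.
Qed.

Lemma diag_form_ge m (d y : 'rV[C]_m) nu :
  (forall l, y 0 l != 0 -> nu <= d 0 l) ->
  nu * (y *m y^t*) 0 0 <= (y *m diag_mx d *m y^t*) 0 0.
Proof.
move=> ge_d; rewrite diag_form dot_form mulr_sumr; apply: ler_sum => l _.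
have [->|yl_neq0] := eqVneq (y 0 l) 0; first by rewrite !(mul0r, mulr0).
by rewrite ler_wpM2r ?mul_conjC_ge0 ?ge_d.
Qed.

End UnitaryForms.

Lemma char_poly_similar (F : fieldType) n (P A : 'M[F]_n) : P \in unitmx ->
  char_poly (invmx P *m A *m P) = char_poly A.
Proof.
move=> Pu; rewrite /char_poly /char_poly_mx.
set Pp := map_mx polyC P.
have Ppu : Pp \in unitmx by rewrite map_unitmx.
have -> : map_mx polyC (invmx P *m A *m P) = invmx Pp *m map_mx polyC A *m Pp.
  by rewrite !map_mxM map_invmx.
have eX : ('X%:M : 'M_n) = invmx Pp *m 'X%:M *m Pp.
  by rewrite -mulmxA -scalar_mxC mulmxA mulVmx // mul1mx.
rewrite {1}eX -mulmxBl -mulmxBr !det_mulmx mulrC mulrA -det_mulmx mulmxV //.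
by rewrite det1 mul1r.
Qed.

Section RealSymmetric.
Variable R : realType.
Local Notation C := R[i].
Local Notation mC := (map_mx (real_complex R)).
Local Notation Re := (@complex.Re R).
Local Notation Im := (@complex.Im R).
Local Open Scope sesquilinear_scope.

Lemma symmetric_spectral m (A : 'M[R]_m) : A^T = A ->
  exists (P : 'M[C]_m) (d : 'rV[R]_m),
    [/\ P \is unitarymx, mC A = invmx P *m diag_mx (mC d) *m P &
        char_poly A = \prod_(i < m) ('X - (d 0 i)%:P)].
Proof.
move=> symA; have hermA : mC A \is hermsymmx.
  apply: realsym_hermsym.
    apply/is_hermitianmxP; rewrite expr0 scale1r.
    by apply/matrixP => i j; rewrite !mxE -[in LHS]symA mxE.
  by apply/mxOverP => i j; rewrite mxE; apply/complex_realP; exists (A i j).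
have /orthomx_spectralP decA := hermitian_normalmx hermA.
have dreal := hermitian_spectral_diag_real hermA.
set P := spectralmx _ in decA; set dC := spectral_diag _ in decA dreal.
pose d := \row_i Re (dC 0 i).
have dE : mC d = dC.
  by apply/matrixP => i j; rewrite !mxE ord1; apply: RRe_real; apply: (mxOverP dreal).
exists P, d; split; first exact: spectral_unitarymx.
  by rewrite dE.
apply: (map_poly_inj (real_complex R)).
rewrite map_char_poly decA char_poly_similar ?spectral_unit //.
rewrite char_poly_trig ?diag_mx_is_trig // rmorph_prod.
apply: eq_bigr => i _; rewrite !mxE eqxx mulr1n rmorphB /= map_polyX map_polyC.
by rewrite -dE mxE.
Qed.

Lemma spectrum_symmetric m (A : 'M[R]_m) : A^T = A -> is_spectrum A (spectrum A).
Proof.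
move=> /symmetric_spectral[P [d [_ _ charA]]]; apply: xgetPex.
exists (sort <=%R [seq d 0 i | i <- index_enum 'I_m]); split.
  exact: (sort_sorted le_total).
by rewrite charA (perm_big _ (permEl (perm_sort _ _))) big_map.
Qed.

Lemma is_spectrum_card m (A : 'M[R]_m) (d : 'rV[R]_m) s (P : pred R) :
  char_poly A = \prod_(i < m) ('X - (d 0 i)%:P) -> is_spectrum A s ->
  #|[pred i | P (d 0 i)]| = count P s.
Proof.
move=> charA [_ charAs].
have /permP -> : perm_eq s [seq d 0 i | i <- index_enum 'I_m].
  by apply: prod_XsubC_eq; rewrite -charAs charA big_map.
by rewrite count_map -sum1_count sum1_card.
Qed.

Lemma eigenvalue_mem_spectrum m (A : 'M[R]_m) s (v : 'rV[R]_m) a :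
  is_spectrum A s -> v != 0 -> v *m A = a *: v -> a \in s.
Proof.
move=> [_ charA] v_neq0 vA.
have : root (char_poly A) a by rewrite -eigenvalue_root_char; apply/eigenvalueP; exists v.
by rewrite charA root_prod_XsubC.
Qed.

Lemma row_complexE m (z : 'rV[C]_m) :
  z = mC (map_mx Re z) + 'i%C *: mC (map_mx Im z).
Proof. by apply/rowP => i; rewrite !mxE -complexE. Qed.

Lemma row_conjcE m (z : 'rV[C]_m) :
  map_mx conjc z = mC (map_mx Re z) + (- 'i%C) *: mC (map_mx Im z).
Proof. by apply/rowP => i; rewrite !mxE; case: (z 0 i) => a b; simpc. Qed.

Lemma qform_complex m (A : 'M[R]_m) (z : 'rV[C]_m) : A^T = A ->
  (z *m mC A *m z^t*) 0 0 = (qform A (map_mx Re z) + qform A (map_mx Im z))%:C%C.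
Proof.
move=> symA.
have -> : z^t* = (map_mx conjc z)^T by rewrite map_trmx.
rewrite -[LHS]/(vdot (z *m mC A) (map_mx conjc z)) row_conjcE {1}(row_complexE z).
rewrite mulmxDl -scalemxAl -!map_mxM !(vdotDl, vdotDr, vdotZl, vdotZr) !vdot_map.
set a := map_mx Re z; set b := map_mx Im z.
rewrite [vdot (b *m A) a]vdot_mulmx_trmx symA [vdot b _]vdotC rmorphD /qform.
by rewrite mulrA mulrN -expr2 sqr_i opprK mul1r; ring.
Qed.

Lemma norm_complex m (z : 'rV[C]_m) :
  (z *m z^t*) 0 0 = (vdot (map_mx Re z) (map_mx Re z) + vdot (map_mx Im z) (map_mx Im z))%:C%C.
Proof. by rewrite -!qform1 -qform_complex ?trmx1 // map_mx1 mulmx1. Qed.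

Lemma vdot_complex m (w : 'rV[R]_m) (z : 'rV[C]_m) :
  vdot z (mC w) = (vdot (map_mx Re z) w +i* vdot (map_mx Im z) w)%C.
Proof.
rewrite {1}(row_complexE z) vdotDl vdotZl !vdot_map.
by simpc.
Qed.

Lemma dot_mC m (x y : 'rV[R]_m) : (mC x *m (mC y)^t*) 0 0 = (vdot x y)%:C%C.
Proof.
have -> : (mC y)^t* = (mC y)^T by apply/matrixP => i j; rewrite !mxE; apply: conjc_real.
by rewrite -vdot_map.
Qed.

Lemma qform_mC m (A : 'M[R]_m) (x : 'rV[R]_m) :
  (mC x *m mC A *m (mC x)^t*) 0 0 = (qform A x)%:C%C.
Proof. by rewrite -map_mxM dot_mC. Qed.

Lemma rayleigh_complex m (A : 'M[R]_m) (w : 'rV[R]_m) mu : A^T = A ->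
  (forall x, vdot x w = 0 -> mu * vdot x x <= qform A x) ->
  forall z, vdot z (mC w) = 0 -> mu%:C%C * (z *m z^t*) 0 0 <= (z *m mC A *m z^t*) 0 0.
Proof.
move=> symA rayleigh z; rewrite vdot_complex => -[orth_re orth_im].
rewrite norm_complex qform_complex // -rmorphM lecR mulrDr.
exact: lerD (rayleigh _ orth_re) (rayleigh _ orth_im).
Qed.

(* Two eigenvalues below mu would give a nonzero combination of their
   eigenvectors orthogonal to w with Rayleigh quotient below mu. *)
Lemma spectrum1_ge_rayleigh m (A : 'M[R]_m) s (w : 'rV[R]_m) mu :
  A^T = A -> is_spectrum A s -> (1 < size s)%N ->
  (forall x, vdot x w = 0 -> mu * vdot x x <= qform A x) -> mu <= s`_1.
Proof.
move=> symA specA size_s rayleigh.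
have [P [d [Pu decA charA]]] := symmetric_spectral symA.
rewrite leNgt; apply/negP => lt_s1_mu.
have : (1 < #|[pred l | (d 0 l < mu)%R]|)%N.
  rewrite (is_spectrum_card (fun x => x < mu) charA specA).
  rewrite (sorted_count_nth1 _ specA.1 size_s) //.
  by move=> x y le_xy; apply: le_lt_trans.
case/card_gt1P => i [j [di dj neq_ij]]; rewrite !inE /= in di dj.
pose nu := Num.max (d 0 i) (d 0 j).
have [y [y_neq0 y_orth y_supp]] := orthogonal_row_on2 (P *m (mC w)^T) neq_ij.
have orth : vdot (y *m P) (mC w) = 0 by rewrite /vdot -mulmxA y_orth mxE.
have := rayleigh_complex symA rayleigh orth.
rewrite decA (unitary_form _ _ Pu) (unitary_dot _ _ Pu) => ge_mu.
have le_nu : (y *m diag_mx (mC d) *m y^t*) 0 0 <= nu%:C%C * (y *m y^t*) 0 0.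
  apply: diag_form_le => l yl_neq0; rewrite mxE lecR.
  have [->|li] := eqVneq l i; first by rewrite le_max lexx.
  have [->|lj] := eqVneq l j; first by rewrite le_max lexx orbT.
  by rewrite y_supp ?eqxx in yl_neq0.
have := le_trans ge_mu le_nu.
by rewrite ler_pM2r ?norm_form_gt0 // lecR leNgt gt_max di dj.
Qed.

(* At most one eigenvalue lies below s`_1, and w spans the corresponding
   eigendirection, so x has no component along it. *)
Lemma rayleigh_ge_spectrum1 m (A : 'M[R]_m) s (w x : 'rV[R]_m) lam :
  A^T = A -> is_spectrum A s -> w != 0 -> w *m A = lam *: w -> lam < s`_1 ->
  vdot x w = 0 -> s`_1 * vdot x x <= qform A x.
Proof.
move=> symA specA w_neq0 wA lam_lt xw.
have [P [d [Pu decA charA]]] := symmetric_spectral symA.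
have Punit := unitarymx_unit Pu.
set y := mC x *m invmx P; set v := mC w *m invmx P.
have xE : mC x = y *m P by rewrite mulmxKV.
have wE : mC w = v *m P by rewrite mulmxKV.
clearbody y v.
have below1 : (#|[pred l | (d 0 l < s`_1)%R]| <= 1)%N.
  rewrite (is_spectrum_card (fun z => z < s`_1) charA specA).
  have [size_s|] := ltnP 1 (size s); last exact: leq_trans (count_size _ _).
  rewrite leqNgt (sorted_count_nth1 _ specA.1 size_s) ?ltxx //.
  by move=> x1 x2 le_x12; apply: le_lt_trans.
have v_eig l : v 0 l != 0 -> d 0 l = lam.
  move=> vl_neq0; apply/complexI.
  have := @eigenvector_coord _ _ P (mC d) v (real_complex R lam) Punit.
  rewrite -wE -decA -map_mxM wA map_mxZ => /(_ erefl l vl_neq0).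
  by rewrite mxE.
have v_neq0 : v != 0.
  by apply: contra w_neq0 => /eqP v0; rewrite -(map_mx_eq0 (real_complex R)) wE v0 mul0mx.
have orth : (y *m v^t*) 0 0 = 0.
  by rewrite -(unitary_dot _ _ Pu) -xE -wE dot_mC xw rmorph0.
have y_above l : y 0 l != 0 -> s`_1 <= d 0 l.
  move=> yl_neq0; rewrite leNgt; apply: contra yl_neq0 => dl_lt; apply/eqP.
  apply: (orthogonal_on_card_le1 below1 v_neq0 _ orth); last by rewrite inE.
  by move=> l' /v_eig; rewrite inE => ->.
have := @diag_form_ge _ _ (mC d) y (s`_1)%:C%C.
rewrite -(unitary_form _ _ Pu) -(unitary_dot _ _ Pu) -xE -decA qform_mC dot_mC.
by rewrite -rmorphM lecR; apply=> l /y_above; rewrite mxE lecR.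
Qed.

End RealSymmetric.

Section Laplacian.
Variables (R : pzRingType) (n : nat) (e : rel 'I_n).
Hypothesis simple_e : simple_graph e.

Lemma laplacian_sym : (laplacian R e)^T = laplacian R e.
Proof.
case: simple_e => sym_e _; apply/matrixP => i j; rewrite !mxE eq_sym.
by case: eqP => [->|_] //; rewrite sym_e.
Qed.

Lemma laplacian_sum_row i : \sum_j laplacian R e i j = 0.
Proof.
case: simple_e => _ irr_e; rewrite (bigD1 i) //= mxE eqxx.
have -> : \sum_(j | j != i) laplacian R e i j = - \sum_j (e i j)%:R.
  rewrite [in RHS](bigD1 i) //= irr_e add0r -sumrN; apply: eq_bigr => j /negbTE ji.
  by rewrite mxE eq_sym ji.
by rewrite (@sumr_indicator _ _ _ [set l | e i l]) ?subrr // => j; rewrite inE.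
Qed.

Lemma ones_laplacian : (const_mx 1 : 'rV_n) *m laplacian R e = 0.
Proof.
rewrite (ones_mulmx (c := 0)) ?scale0r // => j.
by rewrite -[RHS](laplacian_sum_row j); apply: eq_bigr => i _; rewrite -{1}laplacian_sym mxE.
Qed.

End Laplacian.

Lemma laplacian_rayleigh (R : realType) n (e : rel 'I_n) :
  simple_graph e -> (0 < n)%N -> 0 < second_smallest_eig (laplacian R e) ->
  forall u : 'rV[R]_n, vdot u (const_mx 1) = 0 ->
  second_smallest_eig (laplacian R e) * vdot u u <= qform (laplacian R e) u.
Proof.
move=> simple_e n_gt0 conn_gt0 u; have symL := laplacian_sym R simple_e.
apply: (rayleigh_ge_spectrum1 (lam := 0) symL (spectrum_symmetric symL)) => //.
  exact: const1_neq0.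
by rewrite ones_laplacian ?scale0r.
Qed.

Section SupraLaplacian.
Variables (R : realType) (n k : nat) (Q1 Q2 B : 'M[R]_n).
Local Notation ones := (const_mx 1 : 'rV[R]_n).
Local Notation S := (supraQ k Q1 Q2 B).

Lemma qform_supraQ p (u v : 'rV[R]_n) :
  qform (S p) (row_mx u v) = qform Q1 u + qform Q2 v
    + k%:R * p * (vdot u u + vdot v v) - 2 * p * vdot (u *m B) v.
Proof.
rewrite /qform /supraQ mul_row_block vdot_row_mx !mulmxDr !mul_mx_scalar -!scalemxAr.
rewrite !(vdotDl, vdotZl) [vdot (v *m B^T) u]vdot_mulmx_trmx trmxK [vdot v _]vdotC; ring.
Qed.

Hypotheses (symQ1 : Q1^T = Q1) (symQ2 : Q2^T = Q2).
Hypotheses (Q1_ones : ones *m Q1 = 0) (Q2_ones : ones *m Q2 = 0).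
Hypotheses (B_ge0 : forall i j, 0 <= B i j).
Hypotheses (B_rows : forall i, \sum_j B i j = k%:R) (B_cols : forall j, \sum_i B i j = k%:R).

Lemma supraQ_sym p : (S p)^T = S p.
Proof.
by rewrite /supraQ tr_block_mx !linearD /= !tr_scalar_mx symQ1 symQ2 !linearZ /= trmxK.
Qed.

Lemma ones_B : ones *m B = k%:R *: ones.
Proof. exact: ones_mulmx. Qed.

Lemma ones_BT : ones *m B^T = k%:R *: ones.
Proof. by apply: ones_mulmx => j; rewrite -(B_rows j); apply: eq_bigr => i _; rewrite mxE. Qed.

Lemma supraQ_ones p : (const_mx 1 : 'rV[R]_(n + n)) *m S p = 0.
Proof.
rewrite -row_mx_const mul_row_block !mulmxDr !mul_mx_scalar -!scalemxAr.
rewrite Q1_ones Q2_ones ones_B ones_BT -row_mx0.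
by congr row_mx; apply/rowP => j; rewrite !mxE; ring.
Qed.

Lemma supraQ_ones_opp p :
  row_mx ones (- ones) *m S p = (2 * k%:R * p) *: row_mx ones (- ones).
Proof.
rewrite mul_row_block scale_row_mx !mulmxDr !mul_mx_scalar !mulNmx -!scalemxAr.
rewrite Q1_ones Q2_ones ones_B ones_BT.
by congr row_mx; apply/rowP => j; rewrite !mxE; ring.
Qed.

Variables (l1 l2 : R).
Hypothesis rayleigh1 : forall u, vdot u ones = 0 -> l1 * vdot u u <= qform Q1 u.
Hypothesis rayleigh2 : forall v, vdot v ones = 0 -> l2 * vdot v v <= qform Q2 v.

Lemma supraQ_rayleigh_layers p u v : 0 <= p ->
  2 * k%:R * p <= l1 -> 2 * k%:R * p <= l2 -> vdot u ones = 0 -> vdot v ones = 0 ->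
  2 * k%:R * p * (vdot u u + vdot v v) <= qform (S p) (row_mx u v).
Proof.
move=> p_ge0 le_l1 le_l2 u_orth v_orth; rewrite qform_supraQ.
have := rayleigh1 u_orth; have := rayleigh2 v_orth.
have : 2 * k%:R * p * vdot u u <= l1 * vdot u u by rewrite ler_wpM2r ?vdot_ge0.
have : 2 * k%:R * p * vdot v v <= l2 * vdot v v by rewrite ler_wpM2r ?vdot_ge0.
have : p * (2 * vdot (u *m B) v) <= p * (k%:R * (vdot u u + vdot v v)).
  by rewrite ler_wpM2l ?vdot_mulmx_le.
lra.
Qed.

(* Shifting u and v by -t and +t, with t the mean of u, makes both blocks
   orthogonal to 1; the shift itself is along the eigenvector (1, -1). *)
Lemma supraQ_rayleigh p x : (0 < n)%N -> 0 <= p ->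
  2 * k%:R * p <= l1 -> 2 * k%:R * p <= l2 -> vdot x (const_mx 1) = 0 ->
  2 * k%:R * p * vdot x x <= qform (S p) x.
Proof.
move=> n_gt0 p_ge0 le_l1 le_l2 x_orth; rewrite -[x]hsubmxK in x_orth *.
set u := lsubmx x; set v := rsubmx x.
rewrite -row_mx_const vdot_row_mx in x_orth.
pose t := vdot u ones / n%:R; pose e := t *: row_mx ones (- ones).
have xE : row_mx u v = row_mx (u - t *: ones) (v + t *: ones) + e.
  by rewrite /e scale_row_mx add_row_mx scalerN addrK subrK.
have e_eig : e *m S p = (2 * k%:R * p) *: e.
  by rewrite /e -scalemxAl supraQ_ones_opp !scalerA mulrC.
have e_norm : e *m 1%:M = 1 *: e by rewrite mulmx1 scale1r.
have tn : t * n%:R = vdot u ones by rewrite divfK ?pnatr_eq0 -?lt0n.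
have u_orth : vdot (u - t *: ones) ones = 0.
  by rewrite -scaleNr vdotDl vdotZl vdot_const1 mulNr tn subrr.
have v_orth : vdot (v + t *: ones) ones = 0.
  by rewrite vdotDl vdotZl vdot_const1 tn addrC.
rewrite xE (qformD_eigen _ (supraQ_sym p) e_eig) -[vdot (_ + e) _]qform1.
rewrite (qformD_eigen _ (trmx1 _ _) e_norm) qform1 mul1r.
have := supraQ_rayleigh_layers p_ge0 le_l1 le_l2 u_orth v_orth.
rewrite -vdot_row_mx; lra.
Qed.

Lemma second_eig_supraQ p : (0 < n)%N -> (0 < k)%N -> 0 < p ->
  2 * k%:R * p <= l1 -> 2 * k%:R * p <= l2 ->
  second_smallest_eig (S p) = 2 * k%:R * p.
Proof.
move=> n_gt0 k_gt0 p_gt0 le_l1 le_l2; rewrite /second_smallest_eig.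
set mu := 2 * k%:R * p in le_l1 le_l2 *.
have specS := spectrum_symmetric (supraQ_sym p); set s := spectrum (S p) in specS *.
have in0 : 0 \in s.
  apply: (eigenvalue_mem_spectrum specS (const1_neq0 _ _)); last first.
    by rewrite supraQ_ones scale0r.
  by rewrite addn_gt0 n_gt0.
have in_mu : mu \in s.
  apply: (eigenvalue_mem_spectrum specS _ (supraQ_ones_opp p)).
  apply/eqP; rewrite -row_mx0 => /eq_row_mx[/eqP].
  by rewrite (negbTE (const1_neq0 _ n_gt0)).
have mu_gt0 : 0 < mu by rewrite !mulr_gt0 ?ltr0n.
have count2 : (1 < count (fun x => (x <= mu)%R) s)%N.
  by apply: (count_gt1 in0 in_mu); rewrite /= ?(lt_eqF mu_gt0) ?(ltW mu_gt0).
have size_s : (1 < size s)%N := leq_trans count2 (count_size _ _).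
apply/le_anti/andP; split.
  rewrite -(sorted_count_nth1 (P := fun x => x <= mu) _ specS.1 size_s) //.
  by move=> x y; apply: le_trans.
apply: (spectrum1_ge_rayleigh (supraQ_sym p) specS size_s) => x.
exact: supraQ_rayleigh (ltW p_gt0) le_l1 le_l2.
Qed.

End SupraLaplacian.

Lemma zero_one_mx_sums (R : numDomainType) n k (B : 'M[R]_n) :
  (forall i j, B i j = 0 \/ B i j = 1) ->
  (forall i, #|[set j | B i j == 1]| = k) -> (forall j, #|[set i | B i j == 1]| = k) ->
  [/\ forall i j, 0 <= B i j, forall i, \sum_j B i j = k%:R & forall j, \sum_i B i j = k%:R].
Proof.
move=> B01 rowcard colcard.
have B_ind i j : B i j = (B i j == 1)%:R.
  by case: (B01 i j) => ->; rewrite ?eqxx // eq_sym oner_eq0.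
split=> [i j|i|j]; first by rewrite B_ind ler0n.
  by rewrite -(rowcard i); apply: sumr_indicator => j; rewrite inE -B_ind.
by rewrite -(colcard j); apply: sumr_indicator => i; rewrite inE -B_ind.
Qed.

Theorem mainTheorem3 (R : realType) (n k : nat) (e1 e2 : rel 'I_n) (B : 'M[R]_n) :
  simple_graph e1 -> simple_graph e2 ->
  (1 <= k <= n)%N ->
  (forall i j, B i j = 0 \/ B i j = 1) ->
  (forall i, #|[set j | B i j == 1]| = k) ->
  (forall j, #|[set i | B i j == 1]| = k) ->
  ((((2 * k%:R)^-1 * Num.min (second_smallest_eig (laplacian R e1))
                             (second_smallest_eig (laplacian R e2)))%:E
    <= transition_threshold k (laplacian R e1) (laplacian R e2) B)%E).
Proof.
move=> simple1 simple2 /andP[k_gt0 k_le_n] B01 B_rowcard B_colcard.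
have n_gt0 : (0 < n)%N := leq_trans k_gt0 k_le_n.
have [B_ge0 B_rows B_cols] := zero_one_mx_sums B01 B_rowcard B_colcard.
set l1 := second_smallest_eig _; set l2 := second_smallest_eig _.
set c := _ * Num.min l1 l2; rewrite /transition_threshold.
have [c_le0|c_gt0] := leP c 0.
  apply: (@le_trans _ _ 0%:E); first by rewrite lee_fin.
  by apply: ereal_sup_ubound; exists 0 => //; left.
apply: ereal_sup_ubound; exists c => //; right; split => //.
have k2_gt0 : 0 < 2 * k%:R :> R by rewrite mulr_gt0 ?ltr0n.
have : 0 < Num.min l1 l2 by move: c_gt0; rewrite pmulr_rgt0 ?invr_gt0.
rewrite lt_min => /andP[l1_gt0 l2_gt0].
have kc : 2 * k%:R * c = Num.min l1 l2 by rewrite /c mulrA mulfV ?mul1r ?gt_eqF.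
apply: (second_eig_supraQ (laplacian_sym R simple1) (laplacian_sym R simple2)
  (ones_laplacian R simple1) (ones_laplacian R simple2) B_ge0 B_rows B_cols
  (laplacian_rayleigh simple1 n_gt0 l1_gt0)
  (laplacian_rayleigh simple2 n_gt0 l2_gt0)) => //.
  by rewrite kc ge_min lexx.
by rewrite kc ge_min lexx orbT.
Qed.
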